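(* For every infinite computable set $R$, the cost function $\mathbf c_{\Omega,R}$ is benign.
   Context: $\Omega$: fixed left-c.e. ML-random real with computable increasing rational approximations $\Omega_s$. $k_s(n)=\lfloor-\log_2(\Omega_s-\Omega_n)\rfloor$; $\mathbf c_{\Omega,R}(n,s)=2^{-|R\cap k_s(n)|}$ with $R\cap m=R\cap\{0,\dots,m-1\}$. A cost function $\mathbf c$ is benign if there is a computable function $g$ such that for every rational $\epsilon>0$, every sequence $n_1<s_1\le n_2<s_2\le\cdots\le n_\ell<s_\ell$ with $\mathbf c(n_i,s_i)\ge\epsilon$ for all $i\le\ell$ has $\ell\le g(\epsilon)$. *)

From Stdlib Require Import Reals QArith Qreals ZArith Arith List.
Import ListNotations.
Open Scope R_scope.

Inductive prf : Type :=
| PZero : prf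
| PSucc : prf
| PProj : nat -> prf
| PComp : prf -> list prf -> prf
| PRec  : prf -> prf -> prf
| PMu   : prf -> prf.

Inductive eval : prf -> list nat -> nat -> Prop :=
| ev_zero : forall v, eval PZero v 0
| ev_succ : forall x v, eval PSucc (x :: v) (S x)
| ev_proj : forall i v, eval (PProj i) v (nth i v 0%nat)
| ev_comp : forall f gs v ws y,
    evals gs v ws -> eval f ws y -> eval (PComp f gs) v y
| ev_rec0 : forall f g v y, eval f v y -> eval (PRec f g) (0%nat :: v) y
| ev_recS : forall f g n v r y,
    eval (PRec f g) (n :: v) r -> eval g (n :: r :: v) y ->
    eval (PRec f g) (S n :: v) y
| ev_mu : forall f v y,
    eval f (y :: v) 0 ->
    (forall z, (z < y)%nat -> exists k, eval f (z :: v) (S k)) ->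
    eval (PMu f) v y
with evals : list prf -> list nat -> list nat -> Prop :=
| evs_nil : forall v, evals [] v []
| evs_cons : forall g gs v w ws,
    eval g v w -> evals gs v ws -> evals (g :: gs) v (w :: ws).

Definition computable1 (f : nat -> nat) : Prop :=
  exists p, forall n, eval p [n] (f n).

Definition computable2 (f : nat -> nat -> nat) : Prop :=
  exists p, forall n m, eval p [n; m] (f n m).

Definition computable_set (R : nat -> bool) : Prop :=
  computable1 (fun n => if R n then 1%nat else 0%nat).

(* A function from rationals to naturals is computable: computable from the
   representation (numerator as a difference of naturals, denominator). *)
Definition computable_Q_nat (g : Q -> nat) : Prop :=
  exists p, forall (z : Z) (d : positive),
    eval p [Z.to_nat z; Z.to_nat (- z); Pos.to_nat d] (g (Qmake z d)).

Definition computable_seq_Q (q : nat -> Q) : Prop :=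
  exists a b c : nat -> nat,
    computable1 a /\ computable1 b /\ computable1 c /\
    forall s, (q s == Qmake (Z.of_nat (a s) - Z.of_nat (b s))
                            (Pos.of_succ_nat (c s)))%Q.

(* bijection positive <-> list bool; strings coded by naturals *)
Fixpoint pos_bits (p : positive) : list bool :=
  match p with
  | xH => []
  | xO p' => false :: pos_bits p'
  | xI p' => true :: pos_bits p'
  end.

Definition decode_str (c : nat) : list bool := pos_bits (Pos.of_succ_nat c).

Fixpoint is_prefix (s t : list bool) : bool :=
  match s, t with
  | [], _ => true
  | b :: s', b' :: t' => Bool.eqb b b' && is_prefix s' t'
  | _ :: _, [] => false
  end.

Fixpoint all_strings (L : nat) : list (list bool) :=
  match L with
  | O => [[]]
  | S L' => map (cons false) (all_strings L') ++ map (cons true) (all_strings L')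
  end.

(* Lebesgue measure of the open set generated by a finite list of strings *)
Definition meas (S : list (list bool)) : R :=
  let L := fold_right (fun s m => Nat.max (length s) m) 0%nat S in
  INR (length (filter (fun t => existsb (fun s => is_prefix s t) S)
                      (all_strings L))) / 2 ^ L.

(* i-th bit of the binary expansion of (the fractional part of) x *)
Definition real_bit (x : R) (i : nat) : bool :=
  Z.eqb (Z.modulo (Int_part (x * 2 ^ (S i))) 2) 1.

Definition in_cyl (x : R) (s : list bool) : Prop :=
  forall i, (i < length s)%nat -> real_bit x i = nth i s false.

(* Martin-Loef test: uniformly c.e. sequence (U_n) of sets of strings;
   [h n t = S c] means that string [decode_str c] is enumerated into U_n at
   stage t; [h n t = 0] means nothing is enumerated. *)
Definition enum_upto (h : nat -> nat -> nat) (n T : nat) : list (list bool) :=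
  flat_map (fun t => match h n t with
                     | O => []
                     | S c => [decode_str c]
                     end) (seq 0 T).

Definition ML_test (h : nat -> nat -> nat) : Prop :=
  computable2 h /\
  forall n T, meas (enum_upto h n T) <= (/ 2) ^ n.

Definition ML_random (x : R) : Prop :=
  forall h, ML_test h ->
    exists n, forall t c, h n t = S c -> ~ in_cyl x (decode_str c).

Definition left_ce_approx (Om : R) (Oms : nat -> Q) : Prop :=
  computable_seq_Q Oms /\
  (forall s, (Oms s < Oms (S s))%Q) /\
  Un_cv (fun s => Q2R (Oms s)) Om.

Definition kfun (Oms : nat -> Q) (n s : nat) : Z :=
  Int_part (- (ln (Q2R (Oms s) - Q2R (Oms n)) / ln 2)).

Definition card_below (Rs : nat -> bool) (m : Z) : nat :=
  length (filter Rs (seq 0 (Z.to_nat m))).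

Definition cost_OmR (Oms : nat -> Q) (Rs : nat -> bool) (n s : nat) : R :=
  (/ 2) ^ (card_below Rs (kfun Oms n s)).

Definition benign (c : nat -> nat -> R) : Prop :=
  exists g : Q -> nat, computable_Q_nat g /\
    forall (eps : Q), (0 < eps)%Q ->
    forall (l : nat) (ns ss : nat -> nat),
      (forall i, (i < l)%nat -> (ns i < ss i)%nat) ->
      (forall i, (S i < l)%nat -> (ss i <= ns (S i))%nat) ->
      (forall i, (i < l)%nat -> c (ns i) (ss i) >= Q2R eps) ->
      (l <= g eps)%nat.

Definition infinite_set (Rs : nat -> bool) : Prop :=
  forall m, exists i, (m <= i)%nat /\ Rs i = true.

(* If [c(n,s) >= 1/d] then fewer than [d] elements of [R] lie below [k_s(n)],
   so [k_s(n) < j_d], where [j_d] is the least [j] with [|R ∩ j| >= d]; hence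
   [Omega_s - Omega_n > 2^-j_d].  The intervals [[Omega_(n_i), Omega_(s_i)]] of
   a sequence as in the definition of benignity are disjoint and lie in
   [[Omega_0, Omega)], so their number is below [N 2^j_d] for any integer
   [N >= Omega - Omega_0].  Since [R] is computable and infinite, [j_d] is found
   from [d] by an unbounded search, so [g(eps) = N 2^(j_d)] with [d] the
   denominator of [eps] is computable. *)
From Stdlib Require Import Reals QArith Qreals ZArith Arith List Lia Lra.
From Stdlib Require Import Wf_nat ClassicalEpsilon.
Import ListNotations.

Lemma eval_proj_eq i v y : nth i v 0%nat = y -> eval (PProj i) v y.
Proof. intros <-; constructor. Qed.

Lemma eval_comp1 f g v w y :
  eval g v w -> eval f [w] y -> eval (PComp f [g]) v y.
Proof. intros Hg Hf; apply ev_comp with [w]; [repeat constructor; exact Hg | exact Hf]. Qed.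

Lemma eval_comp2 f g1 g2 v w1 w2 y :
  eval g1 v w1 -> eval g2 v w2 -> eval f [w1; w2] y ->
  eval (PComp f [g1; g2]) v y.
Proof.
  intros H1 H2 Hf; apply ev_comp with [w1; w2]; [repeat constructor; assumption | exact Hf].
Qed.

Lemma eval_rec f g v (h : nat -> nat) :
  eval f v (h 0%nat) -> (forall n, eval g (n :: h n :: v) (h (S n))) ->
  forall n, eval (PRec f g) (n :: v) (h n).
Proof.
  intros Hf Hg n; induction n as [|n IH].
  - now constructor.
  - eapply ev_recS; [exact IH | apply Hg].
Qed.

Lemma eval_mu_least f v (h : nat -> nat) :
  (forall y, eval f (y :: v) (h y)) -> (exists y, h y = 0%nat) ->
  exists y, h y = 0%nat /\ eval (PMu f) v y.
Proof.
  intros Hf Hex.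
  destruct (dec_inh_nat_subset_has_unique_least_element (fun y => h y = 0%nat))
    as [y [[Hy Hleast] _]]; [intros n; lia | exact Hex |].
  exists y; split; [exact Hy |].
  constructor; [rewrite <- Hy; apply Hf |].
  intros z Hz; destruct (h z) as [|k] eqn:E.
  - specialize (Hleast z E); lia.
  - exists k; rewrite <- E; apply Hf.
Qed.

Fixpoint Pconst (k : nat) : prf :=
  match k with O => PZero | S k' => PComp PSucc [Pconst k'] end.

Lemma eval_const k v : eval (Pconst k) v k.
Proof.
  induction k as [|k IH]; [constructor |].
  apply (eval_comp1 _ _ _ _ _ IH); constructor.
Qed.

Definition Padd := PRec (PProj 0) (PComp PSucc [PProj 1]).

Lemma eval_add n m : eval Padd [n; m] (n + m)%nat.
Proof.
  apply (eval_rec _ _ _ (fun n => n + m)%nat); [now apply eval_proj_eq |].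
  intros k; apply eval_comp1 with (k + m)%nat; [now apply eval_proj_eq | constructor].
Qed.

Definition Pmul := PRec PZero (PComp Padd [PProj 1; PProj 2]).

Lemma eval_mul n m : eval Pmul [n; m] (n * m)%nat.
Proof.
  apply (eval_rec _ _ _ (fun n => n * m)%nat); [constructor |].
  intros k; apply eval_comp2 with (k * m)%nat m; try now apply eval_proj_eq.
  replace (S k * m)%nat with (k * m + m)%nat by lia; apply eval_add.
Qed.

Definition Ppow2 := PRec (Pconst 1) (PComp Padd [PProj 1; PProj 1]).

Lemma eval_pow2 n : eval Ppow2 [n] (2 ^ n)%nat.
Proof.
  apply (eval_rec _ _ _ (fun n => 2 ^ n)%nat); [apply eval_const |].
  intros k; apply eval_comp2 with (2 ^ k)%nat (2 ^ k)%nat; try now apply eval_proj_eq.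
  replace (2 ^ S k)%nat with (2 ^ k + 2 ^ k)%nat by (simpl; lia); apply eval_add.
Qed.

Definition Ppred := PRec PZero (PProj 0).

Lemma eval_pred n : eval Ppred [n] (Nat.pred n).
Proof.
  apply (eval_rec _ _ _ Nat.pred); [constructor |].
  intros k; now apply eval_proj_eq.
Qed.

(* Truncated subtraction with swapped arguments: [[n; m]] evaluates to [m - n]. *)
Definition Pmonus := PRec (PProj 0) (PComp Ppred [PProj 1]).

Lemma eval_monus n m : eval Pmonus [n; m] (m - n)%nat.
Proof.
  apply (eval_rec _ _ _ (fun n => m - n)%nat); [apply eval_proj_eq; simpl; lia |].
  intros k; apply eval_comp1 with (m - k)%nat; [now apply eval_proj_eq |].
  replace (m - S k)%nat with (Nat.pred (m - k)) by lia; apply eval_pred.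
Qed.

Definition count_below (Rs : nat -> bool) (j : nat) : nat :=
  length (filter Rs (seq 0 j)).

Lemma count_below_S (Rs : nat -> bool) j :
  count_below Rs (S j) = (count_below Rs j + if Rs j then 1 else 0)%nat.
Proof.
  unfold count_below; rewrite seq_S, filter_app, length_app; simpl.
  now destruct (Rs j).
Qed.

Lemma count_below_mono Rs a b :
  (a <= b)%nat -> (count_below Rs a <= count_below Rs b)%nat.
Proof. induction 1; [lia | rewrite count_below_S; lia]. Qed.

Lemma count_below_unbounded Rs :
  infinite_set Rs -> forall d, exists j, (d <= count_below Rs j)%nat.
Proof.
  intros Hinf d; induction d as [|d [j Hj]]; [now exists 0%nat |].
  destruct (Hinf j) as [i [Hji HRi]].
  exists (S i); rewrite count_below_S, HRi.
  pose proof (count_below_mono Rs _ _ Hji); lia.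
Qed.

Definition Pcount (pR : prf) :=
  PRec PZero (PComp Padd [PProj 1; PComp pR [PProj 0]]).

Lemma eval_count (Rs : nat -> bool) pR :
  (forall n, eval pR [n] (if Rs n then 1 else 0)%nat) ->
  forall j, eval (Pcount pR) [j] (count_below Rs j).
Proof.
  intros HR; apply (eval_rec _ _ _ (count_below Rs)); [constructor |].
  intros k; rewrite count_below_S.
  apply eval_comp2 with (count_below Rs k) (if Rs k then 1 else 0)%nat.
  - now apply eval_proj_eq.
  - apply eval_comp1 with k; [now apply eval_proj_eq | apply HR].
  - apply eval_add.
Qed.

Lemma threshold_computable Rs :
  computable_set Rs -> infinite_set Rs ->
  exists (F : nat -> nat) p,
    (forall d, d <= count_below Rs (F d))%nat /\ forall d, eval p [d] (F d).
Proof.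
  intros [pR HpR] Hinf.
  set (deficit := PComp Pmonus [PComp (Pcount pR) [PProj 0]; PProj 1]).
  set (search := PMu deficit).
  assert (Hsearch : forall d, exists y,
             (d <= count_below Rs y)%nat /\ eval search [d] y).
  { intros d.
    destruct (eval_mu_least deficit [d] (fun y => d - count_below Rs y)%nat)
      as [y [Hy Hev]].
    - intros y; apply eval_comp2 with (count_below Rs y) d.
      + apply eval_comp1 with y; [now apply eval_proj_eq | now apply eval_count].
      + now apply eval_proj_eq.
      + apply eval_monus.
    - destruct (count_below_unbounded Rs Hinf d) as [y Hy]; exists y; lia.
    - exists y; split; [lia | exact Hev]. }
  exists (fun d => proj1_sig (constructive_indefinite_description _ (Hsearch d))),
    search.
  split; intros d; apply (proj2_sig (constructive_indefinite_description _ (Hsearch d))).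
Qed.

Open Scope R_scope.

Lemma pow_half_ge_inv_lt (c d : nat) : (0 < d)%nat -> (/ 2) ^ c >= / INR d -> (c < d)%nat.
Proof.
  intros Hd Hc; destruct (Nat.lt_ge_cases c d) as [|Hdc]; [assumption | exfalso].
  assert (Hd_lt : INR d < 2 ^ d).
  { pose proof (lt_INR _ _ (Nat.pow_gt_lin_r 2 d ltac:(lia))) as H.
    rewrite pow_INR in H; replace (INR 2) with 2 in H by (simpl; lra); exact H. }
  assert (2 ^ d <= 2 ^ c) by (apply Rle_pow; lra || lia).
  assert (0 < INR d) by (apply lt_0_INR; lia).
  assert (/ 2 ^ c < / INR d) by (apply Rinv_lt_contravar; nra).
  rewrite pow_inv in Hc; lra.
Qed.

Lemma half_pow_lt_of_log2_floor (D : R) (j : nat) :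
  0 < D -> (Int_part (- (ln D / ln 2)) < Z.of_nat j)%Z -> (/ 2) ^ j < D.
Proof.
  intros HD Hk.
  assert (Hk1 : IZR (Int_part (- (ln D / ln 2))) + 1 <= INR j).
  { rewrite INR_IZR_INZ, <- plus_IZR; apply IZR_le; lia. }
  destruct (base_Int_part (- (ln D / ln 2))) as [_ Hfl].
  assert (Hln2 : 0 < ln 2) by (rewrite <- ln_1; apply ln_increasing; lra).
  assert (Hlog : - ln D < INR j * ln 2).
  { assert (- (ln D / ln 2) < INR j) as H by lra.
    unfold Rdiv in H; apply Rmult_lt_reg_r with (/ ln 2);
      [apply Rinv_0_lt_compat; lra | rewrite Rmult_assoc, Rinv_r; lra]. }
  apply ln_lt_inv; [apply pow_lt; lra | exact HD |].
  rewrite ln_pow, ln_Rinv by lra; lra.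
Qed.

Lemma chained_gaps_bound (u : nat -> R) (B delta : R) (l : nat) (ns ss : nat -> nat) :
  Un_growing u -> (forall a b, u b - u a < B) ->
  (forall i, (S i < l)%nat -> (ss i <= ns (S i))%nat) ->
  (forall i, (i < l)%nat -> delta < u (ss i) - u (ns i)) ->
  INR l * delta < B.
Proof.
  intros Hgrow Hosc Hchain Hgap.
  assert (Hsum : forall j, (S j <= l)%nat -> INR (S j) * delta < u (ss j) - u (ns 0%nat)).
  { intros j; induction j as [|j IH]; intros Hj.
    - specialize (Hgap 0%nat ltac:(lia)); simpl; lra.
    - specialize (IH ltac:(lia)); specialize (Hgap (S j) ltac:(lia)).
      pose proof (growing_prop u _ _ Hgrow (Hchain j ltac:(lia))).
      rewrite S_INR; lra. }
  destruct l as [|l]; [specialize (Hosc 0%nat 0%nat); simpl; lra |].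
  specialize (Hsum l (le_n _)); specialize (Hosc (ns 0%nat) (ss l)); lra.
Qed.

Section LeftCeApproximation.

Variables (Om : R) (Oms : nat -> Q).
Hypothesis HOm : left_ce_approx Om Oms.

Let omega s := Q2R (Oms s).

Lemma omega_growing : Un_growing omega.
Proof. intros s; destruct HOm as [_ [Hinc _]]; apply Rlt_le, Qlt_Rlt, Hinc. Qed.

Lemma omega_lt_limit s : omega s < Om.
Proof.
  destruct HOm as [_ [Hinc Hcv]].
  pose proof (Qlt_Rlt _ _ (Hinc s)).
  pose proof (growing_ineq omega Om omega_growing Hcv (S s)).
  unfold omega in *; lra.
Qed.

Lemma omega_gap_of_cost (Rs : nat -> bool) (d j n s : nat) :
  (0 < d)%nat -> (d <= count_below Rs j)%nat -> (n < s)%nat ->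
  cost_OmR Oms Rs n s >= / INR d -> (/ 2) ^ j < omega s - omega n.
Proof.
  intros Hd Hdj Hns Hc.
  apply half_pow_lt_of_log2_floor.
  - destruct HOm as [_ [Hinc _]].
    pose proof (Qlt_Rlt _ _ (Hinc n)).
    pose proof (growing_prop omega _ _ omega_growing Hns).
    unfold omega in *; lra.
  - apply pow_half_ge_inv_lt in Hc; [| exact Hd].
    change (kfun Oms n s < Z.of_nat j)%Z.
    destruct (Z.lt_ge_cases (kfun Oms n s) 0) as [| Hk]; [lia |].
    destruct (Nat.lt_ge_cases (Z.to_nat (kfun Oms n s)) j) as [| Hjk]; [lia |].
    pose proof (count_below_mono Rs _ _ Hjk).
    unfold card_below, count_below in *; lia.
Qed.

Lemma cost_chain_length_bound (Rs : nat -> bool) (N d j : nat) :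
  Om - omega 0%nat <= INR N -> (0 < d)%nat -> (d <= count_below Rs j)%nat ->
  forall l (ns ss : nat -> nat),
    (forall i, (i < l)%nat -> (ns i < ss i)%nat) ->
    (forall i, (S i < l)%nat -> (ss i <= ns (S i))%nat) ->
    (forall i, (i < l)%nat -> cost_OmR Oms Rs (ns i) (ss i) >= / INR d) ->
    (l <= N * 2 ^ j)%nat.
Proof.
  intros HN Hd Hdj l ns ss Hlt Hchain Hcost.
  assert (Hosc : forall a b, omega b - omega a < INR N).
  { intros a b; pose proof (omega_lt_limit b).
    pose proof (growing_prop omega _ _ omega_growing (Nat.le_0_l a)); lra. }
  pose proof (chained_gaps_bound omega (INR N) ((/ 2) ^ j) l ns ss omega_growing
                Hosc Hchain (fun i Hi => omega_gap_of_cost Rs d j _ _ Hd Hdj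
                                           (Hlt i Hi) (Hcost i Hi))) as Hl.
  assert (Hpow : 0 < 2 ^ j) by (apply pow_lt; lra).
  assert (INR l < INR (N * 2 ^ j)); [| apply INR_lt in H; lia].
  rewrite mult_INR, pow_INR; replace (INR 2) with 2 by (simpl; lra).
  rewrite pow_inv in Hl.
  apply Rmult_lt_compat_r with (r := 2 ^ j) in Hl; [| exact Hpow].
  rewrite Rmult_assoc, Rinv_l in Hl by lra; lra.
Qed.

End LeftCeApproximation.

Lemma inv_den_le_Q2R (q : Q) : (0 < q)%Q -> / INR (Pos.to_nat (Qden q)) <= Q2R q.
Proof.
  destruct q as [z d]; unfold Qlt; simpl; intros Hz.
  unfold Q2R; simpl; rewrite INR_IZR_INZ, positive_nat_Z.
  assert (1 <= IZR z) by (apply IZR_le; lia).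
  assert (0 < / IZR (Z.pos d)) by (apply Rinv_0_lt_compat, IZR_lt; lia).
  nra.
Qed.

Theorem proposition7p2 (Om : R) (Oms : nat -> Q)
  (HOm : left_ce_approx Om Oms) (Hrand : ML_random Om) :
  forall Rs : nat -> bool, computable_set Rs -> infinite_set Rs ->
    benign (cost_OmR Oms Rs).
Proof.
  intros Rs HR Hinf.
  destruct (INR_unbounded (Om - Q2R (Oms 0%nat))) as [N HN].
  destruct (threshold_computable Rs HR Hinf) as [F [pF [HF HpF]]].
  exists (fun eps => N * 2 ^ F (Pos.to_nat (Qden eps)))%nat; split.
  - exists (PComp Pmul [Pconst N; PComp Ppow2 [PComp pF [PProj 2]]]).
    intros z d; apply eval_comp2 with N (2 ^ F (Pos.to_nat d))%nat;
      [apply eval_const | | apply eval_mul].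
    apply eval_comp1 with (F (Pos.to_nat d)); [| apply eval_pow2].
    apply eval_comp1 with (Pos.to_nat d); [now apply eval_proj_eq | apply HpF].
  - intros eps Heps l ns ss Hlt Hchain Hcost.
    apply (cost_chain_length_bound Om Oms HOm Rs N (Pos.to_nat (Qden eps)))
      with ns ss; try assumption; [lra | lia | apply HF |].
    intros i Hi; specialize (Hcost i Hi).
    pose proof (inv_den_le_Q2R eps Heps); lra.
Qed.
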